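(* Let $\boldsymbol p=(p,0,r)\in\mathbb{Z}^3$ with $1\le p\le r$. Then $$A(\boldsymbol a;\boldsymbol p)=\frac{1}{(\gamma-\alpha)_{r-p}(\gamma-\beta)_r}\begin{pmatrix}\dfrac{(\gamma)_r\,\phi_{11}^{(r-1)}}{(\alpha+1)_{p-1}} & \dfrac{(\gamma+1)_{r-1}\,\phi_{12}^{(r-1)}}{(\alpha+1)_{p-1}}\\[3mm] \dfrac{(\gamma)_{r+1}\,\phi_{21}^{(r-1)}}{(\alpha+1)_p} & \dfrac{(\gamma+1)_r\,\phi_{22}^{(r)}}{(\alpha+1)_p}\end{pmatrix},$$ where each $\phi_{ij}^{(k)}=\phi_{ij}^{(k)}(\boldsymbol a;\boldsymbol p)$ is a polynomial in $\alpha,\beta,\gamma$ (with coefficients rational in $z$) of degree at most $k$ in the variables $(\alpha,\gamma)$. Moreover $$\det A(\boldsymbol a;\boldsymbol p)=\frac{z^{-r}(z-1)^{r-p}(\gamma)_r(\gamma+1)_r}{(\alpha+1)_p(\gamma-\alpha)_{r-p}(\gamma-\beta)_r}.$$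
   Context: Write $\boldsymbol a=(\alpha,\beta,\gamma)$, ${}_2F_1(\boldsymbol a;z)={}_2F_1(\alpha,\beta;\gamma;z)$, $\boldsymbol 1=(1,1,1)$. For $\boldsymbol p\in\mathbb{Z}^3$ let $r(\boldsymbol a;\boldsymbol p;z)$, $q(\boldsymbol a;\boldsymbol p;z)$ be the unique rational functions of $(\alpha,\beta,\gamma,z)$ with ${}_2F_1(\boldsymbol a+\boldsymbol p;z)=r(\boldsymbol a;\boldsymbol p;z)\,{}_2F_1(\boldsymbol a;z)+q(\boldsymbol a;\boldsymbol p;z)\,{}_2F_1(\boldsymbol a+\boldsymbol 1;z)$ (obtained from Gauss's contiguous relations). Set $A(\boldsymbol a;\boldsymbol p):=\begin{pmatrix}r(\boldsymbol a;\boldsymbol p;z)&q(\boldsymbol a;\boldsymbol p;z)\\ r(\boldsymbol a;\boldsymbol p+\boldsymbol 1;z)&q(\boldsymbol a;\boldsymbol p+\boldsymbol 1;z)\end{pmatrix}$, so that $(F(\boldsymbol a+\boldsymbol p),F(\boldsymbol a+\boldsymbol p+\boldsymbol 1))^t=A(\boldsymbol a;\boldsymbol p)(F(\boldsymbol a),F(\boldsymbol a+\boldsymbol 1))^t$ with $F={}_2F_1(\cdot;z)$. $(\alpha)_k$ is the Pochhammer symbol. *)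

From HB Require Import structures.
From mathcomp Require Import all_boot all_order all_algebra.
From mathcomp Require Import fraction mpoly.
Set Implicit Arguments. Unset Strict Implicit. Unset Printing Implicit Defensive.
Import Order.TTheory GRing.Theory Num.Theory.
Local Open Scope ring_scope.

(* The field of rational functions Q(z)(gamma)(beta)(alpha), built as
   iterated fraction fields of univariate polynomial rings. *)
Definition Kz : fieldType := {fraction {poly rat}}.
Definition Kg : fieldType := {fraction {poly Kz}}.
Definition Kb : fieldType := {fraction {poly Kg}}.
Definition K  : fieldType := {fraction {poly Kb}}.

Definition embz (x : Kz) : Kg := FracField.tofrac (x%:P).
Definition embg (x : Kg) : Kb := FracField.tofrac (x%:P).
Definition embb (x : Kb) : K := FracField.tofrac (x%:P).
Definition embK (x : Kz) : K := embb (embg (embz x)).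

Definition zz : Kz := FracField.tofrac ('X : {poly rat}).
Definition zK : K := embK zz.
Definition gK : K := embb (embg (FracField.tofrac ('X : {poly Kz}))).
Definition bK : K := embb (FracField.tofrac ('X : {poly Kg})).
Definition aK : K := FracField.tofrac ('X : {poly Kb}).

Definition poch (x : K) (n : nat) : K := \prod_(i < n) (x + i%:R).

Definition mx2 (x11 x12 x21 x22 : K) : 'M[K]_2 :=
  \matrix_(i < 2, j < 2)
    if (i == 0 :> nat) then (if (j == 0 :> nat) then x11 else x12)
    else (if (j == 0 :> nat) then x21 else x22).

(* One-step contiguity matrices (from Gauss's contiguous relations) with
   F = 2F1(.;z), b = (a, b, c):
   (F(b+e1), F(b+e1+1))^t = S_alpha b (F(b), F(b+1))^t,
   (F(b+e3), F(b+e3+1))^t = S_gamma b (F(b), F(b+1))^t. *)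
Definition S_alpha (a b c : K) : 'M[K]_2 :=
  mx2 1 (zK * b / c)
      (c / ((a + 1) * (1 - zK))) ((a + 1 - c + b * zK) / ((a + 1) * (1 - zK))).

Definition S_gamma (a b c : K) : 'M[K]_2 :=
  let d := (c - a) * (c - b) in
  mx2 (c * (c - a - b) / d) ((1 - zK) * a * b / d)
      (c * (c + 1) / (zK * d)) (- (c * (c + 1) * (1 - zK)) / (zK * d)).

Fixpoint A_gamma (a b c : K) (r : nat) : 'M[K]_2 :=
  match r with
  | 0 => 1%:M
  | r'.+1 => S_gamma a b (c + r'%:R) *m A_gamma a b c r'
  end.

(* A((a,b,c); (p,0,r)): the connection matrix with
   (F(a+p), F(a+p+1))^t = A (F(a), F(a+1))^t, p = (p,0,r). *)
Fixpoint A_p0r (a b c : K) (p r : nat) : 'M[K]_2 :=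
  match p with
  | 0 => A_gamma a b c r
  | p'.+1 => S_alpha (a + p'%:R) b (c + r%:R) *m A_p0r a b c p' r
  end.

Definition Amat (p r : nat) : 'M[K]_2 := A_p0r aK bK gK p r.

(* evaluation of a polynomial in (alpha, beta, gamma) with coefficients
   in Q(z) at the generic point; variable 0 = alpha, 1 = beta, 2 = gamma *)
Definition abg (i : 'I_3) : K :=
  if (i == 0 :> nat) then aK else if (i == 1 :> nat) then bK else gK.
Definition evalABG (phi : {mpoly Kz[3]}) : K := (map_mpoly embK phi).@[abg].

Definition deg_ag_le (phi : {mpoly Kz[3]}) (k : nat) : Prop :=
  forall m, m \in msupp phi ->
    (m ord0 + m (@Ordinal 3 2 isT) <= k)%N.

(* Each contiguity step is, up to a scalar and a conjugation by diagonal
   matrices, a matrix of polynomials of degree at most one in (alpha, gamma):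
     S_gamma(a,b,c) = c/((c-a)(c-b)) diag(1,c+1) N_gamma(c) diag(1,1/c),
     S_alpha(a,b,c+1) S_gamma(a,b,c) = c/((a+1)(c-b)) diag(a+1,c+1) N_diag(c) diag(1,1/c).
   As alpha- and gamma-steps commute, A(a;(p,0,r)) is the product of r-p
   gamma-steps followed by p diagonal steps raising alpha and gamma together.
   Along this path the diagonal conjugations telescope, leaving
     A(a;(p,0,r)) = kappa diag(alpha+p, gamma+r) Phi diag(1, 1/gamma)
   with kappa a ratio of Pochhammer symbols and Phi a product of r such
   polynomial matrices (and of diagonal factors of degree one); counting
   degrees entrywise in Phi gives the bounds on the phi_ij.
   The determinant is the product of the determinants of the steps. *)

From Pilot Require Import Defs.
From HB Require Import structures.
From mathcomp Require Import all_boot all_order all_algebra.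
From mathcomp Require Import fraction mpoly.
From mathcomp Require Import ring zify.
Import Order.TTheory GRing.Theory Num.Theory.
Local Open Scope ring_scope.

Set Implicit Arguments. Unset Strict Implicit. Unset Printing Implicit Defensive.

(* Each side condition left by [field] is, up to [ring], a hypothesis in context. *)
Ltac nonzero_by_hyp :=
  match goal with
  | |- is_true (?x != 0) =>
      first [ assumption | exact: oner_neq0
            | match goal with H : is_true (?y != 0) |- _ => suff -> : x = y by []; ring end ]
  end.
Ltac field_side := repeat (apply/andP; split); try nonzero_by_hyp.

(* The objects of Defs over an arbitrary field [F], with [z] in place of [zK];
   at [(K, zK)] they are those of Defs up to conversion. *)
Module Generic.
Section Contiguity.
Variables (F : fieldType) (z : F).

Definition mx2 (x11 x12 x21 x22 : F) : 'M[F]_2 :=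
  \matrix_(i < 2, j < 2)
    if (i == 0 :> nat) then (if (j == 0 :> nat) then x11 else x12)
    else (if (j == 0 :> nat) then x21 else x22).

Definition S_alpha (a b c : F) : 'M[F]_2 :=
  mx2 1 (z * b / c)
      (c / ((a + 1) * (1 - z))) ((a + 1 - c + b * z) / ((a + 1) * (1 - z))).

Definition S_gamma (a b c : F) : 'M[F]_2 :=
  let d := (c - a) * (c - b) in
  mx2 (c * (c - a - b) / d) ((1 - z) * a * b / d)
      (c * (c + 1) / (z * d)) (- (c * (c + 1) * (1 - z)) / (z * d)).

Fixpoint A_gamma (a b c : F) (r : nat) : 'M[F]_2 :=
  match r with
  | 0 => 1%:M
  | r'.+1 => S_gamma a b (c + r'%:R) *m A_gamma a b c r'
  end.

Fixpoint A_p0r (a b c : F) (p r : nat) : 'M[F]_2 :=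
  match p with
  | 0 => A_gamma a b c r
  | p'.+1 => S_alpha (a + p'%:R) b (c + r%:R) *m A_p0r a b c p' r
  end.

Definition poch (x : F) (n : nat) : F := \prod_(i < n) (x + i%:R).

Definition diag2 (x y : F) : 'M[F]_2 := mx2 x 0 0 y.

Lemma mx2E00 x11 x12 x21 x22 : mx2 x11 x12 x21 x22 0 0 = x11. Proof. by rewrite mxE. Qed.
Lemma mx2E01 x11 x12 x21 x22 : mx2 x11 x12 x21 x22 0 1 = x12. Proof. by rewrite mxE. Qed.
Lemma mx2E10 x11 x12 x21 x22 : mx2 x11 x12 x21 x22 1 0 = x21. Proof. by rewrite mxE. Qed.
Lemma mx2E11 x11 x12 x21 x22 : mx2 x11 x12 x21 x22 1 1 = x22. Proof. by rewrite mxE. Qed.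
Definition mx2E := (mx2E00, mx2E01, mx2E10, mx2E11).

Lemma mx2_eta (A : 'M[F]_2) : A = mx2 (A 0 0) (A 0 1) (A 1 0) (A 1 1).
Proof.
apply/matrixP => i j; rewrite !mxE.
by case: i => [[|[|//]] ?]; case: j => [[|[|//]] ?] /=; congr (A _ _); apply: val_inj.
Qed.

Lemma mulmx2E (A B : 'M[F]_2) i j : (A *m B) i j = A i 0 * B 0 j + A i 1 * B 1 j.
Proof.
rewrite mxE !big_ord_recl big_ord0 addr0.
by congr (A i _ * B _ j + A i _ * B _ j); apply: val_inj.
Qed.

Lemma mul_mx2 x11 x12 x21 x22 y11 y12 y21 y22 :
  mx2 x11 x12 x21 x22 *m mx2 y11 y12 y21 y22 =
  mx2 (x11 * y11 + x12 * y21) (x11 * y12 + x12 * y22)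
      (x21 * y11 + x22 * y21) (x21 * y12 + x22 * y22).
Proof.
apply/matrixP => i j; rewrite mulmx2E !mxE.
by case: i => [[|[|//]] ?]; case: j => [[|[|//]] ?].
Qed.

Lemma scale_mx2 k x11 x12 x21 x22 :
  k *: mx2 x11 x12 x21 x22 = mx2 (k * x11) (k * x12) (k * x21) (k * x22).
Proof.
apply/matrixP => i j; rewrite !mxE.
by case: i => [[|[|//]] ?]; case: j => [[|[|//]] ?].
Qed.

Lemma mx2_1 : 1%:M = mx2 1 0 0 1.
Proof. by rewrite [LHS]mx2_eta !mxE. Qed.

Lemma diag2_1 : diag2 1 1 = 1%:M.
Proof. by rewrite mx2_1. Qed.

Lemma det_mx2 x11 x12 x21 x22 : \det (mx2 x11 x12 x21 x22) = x11 * x22 - x12 * x21.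
Proof.
rewrite (expand_det_row _ 0) !big_ord_recl big_ord0 addr0 /cofactor !det_mx11 !mxE /=.
by rewrite expr0 expr1 mul1r mulN1r mulrN.
Qed.


Lemma poch0 x : poch x 0 = 1.
Proof. by rewrite /poch big_ord0. Qed.

Lemma poch1 x : poch x 1 = x.
Proof. by rewrite /poch big_ord1 addr0. Qed.

Lemma pochS x n : poch x n.+1 = poch x n * (x + n%:R).
Proof. by rewrite /poch big_ord_recr. Qed.

Lemma pochSl x n : poch x n.+1 = x * poch (x + 1) n.
Proof.
rewrite /poch big_ord_recl /= addr0; congr (_ * _); apply: eq_bigr => i _.
by rewrite -addrA nat1r.
Qed.

Lemma pochD x m n : poch x (m + n) = poch x m * poch (x + m%:R) n.
Proof.
elim: n => [|n IH]; first by rewrite addn0 poch0 mulr1.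
by rewrite addnS !pochS IH natrD addrA mulrA.
Qed.

Lemma poch_neq0 x n : (forall i : nat, x + i%:R != 0) -> poch x n != 0.
Proof. by move=> x_neq0; apply/prodf_neq0 => i _; apply: x_neq0. Qed.

Fixpoint A_alpha (a b c : F) (p : nat) : 'M[F]_2 :=
  match p with
  | 0 => 1%:M
  | p'.+1 => S_alpha (a + p'%:R) b c *m A_alpha a b c p'
  end.

Fixpoint A_diag (a b c : F) (p : nat) : 'M[F]_2 :=
  match p with
  | 0 => 1%:M
  | p'.+1 => S_alpha (a + p'%:R) b (c + p'%:R + 1) *m S_gamma (a + p'%:R) b (c + p'%:R)
             *m A_diag a b c p'
  end.

Lemma A_diagS a b c p : A_diag a b c p.+1 =
  S_alpha (a + p%:R) b (c + p%:R + 1) *m S_gamma (a + p%:R) b (c + p%:R) *m A_diag a b c p.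
Proof. by []. Qed.

Lemma A_p0r_alpha a b c p r : A_p0r a b c p r = A_alpha a b (c + r%:R) p *m A_gamma a b c r.
Proof. by elim: p => [|p IH] /=; rewrite ?mul1mx // IH mulmxA. Qed.

Lemma A_gamma_add a b c s q : A_gamma a b c (s + q) = A_gamma a b (c + s%:R) q *m A_gamma a b c s.
Proof.
elim: q => [|q IH]; first by rewrite addn0 mul1mx.
by rewrite addnS /= IH mulmxA natrD addrA.
Qed.

Lemma mulmx_diag2_conj k1 k2 (L P N R : 'M[F]_2) (x t : F) : t != 0 ->
  (k1 *: (L *m P *m diag2 1 t^-1)) *m (k2 *: (diag2 x t *m N *m R)) =
  (k1 * k2) *: (L *m (P *m diag2 x 1 *m N) *m R).
Proof.
move=> t_neq0; rewrite -scalemxAl -scalemxAr scalerA; congr (_ *: _).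
have -> : diag2 x 1 = diag2 1 t^-1 *m diag2 x t.
  by rewrite /diag2 mul_mx2; congr mx2; rewrite ?mulVf //; ring.
by rewrite !mulmxA.
Qed.

Definition N_gamma (a b c : F) : 'M[F]_2 :=
  mx2 (c - a - b) ((1 - z) * a * b) z^-1 (- (1 - z) * c / z).

Definition N_diag (b c : F) : 'M[F]_2 :=
  mx2 1 (- (1 - z) * b) (- z^-1) ((c - b * z) / z).

Fixpoint N_gamma_prod (a b c : F) (s : nat) : 'M[F]_2 :=
  match s with
  | 0 => 1%:M
  | s'.+1 => N_gamma a b (c + s'%:R) *m N_gamma_prod a b c s'
  end.

(* The factors [diag2 (a + j) 1] are what the diagonal conjugations of two
   consecutive diagonal steps leave behind. *)
Fixpoint N_diag_prod (a b c : F) (p : nat) : 'M[F]_2 :=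
  match p with
  | 0 => N_diag b c
  | p'.+1 => N_diag b (c + p'.+1%:R) *m diag2 (a + p'.+1%:R) 1 *m N_diag_prod a b c p'
  end.

Definition Phi (a b g : F) (s p : nat) : 'M[F]_2 :=
  N_diag_prod a b (g + s%:R) p *m N_gamma_prod a b g s.

Section Steps.
Hypotheses (z_neq0 : z != 0) (z_neq1 : 1 - z != 0).

Lemma S_alpha_S_gamma_commute (a b c : F) :
  c != 0 -> c + 1 != 0 -> a + 1 != 0 -> c - a != 0 -> c - (a + 1) != 0 -> c - b != 0 ->
  S_alpha a b (c + 1) *m S_gamma a b c = S_gamma (a + 1) b c *m S_alpha a b c.
Proof. by move=> *; rewrite /S_alpha /S_gamma !mul_mx2; congr mx2; field; field_side. Qed.

Lemma S_gamma_factor (a b c : F) : c != 0 -> c - a != 0 -> c - b != 0 ->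
  S_gamma a b c =
  (c / ((c - a) * (c - b))) *: (diag2 1 (c + 1) *m N_gamma a b c *m diag2 1 c^-1).
Proof.
by move=> *; rewrite /S_gamma /N_gamma /diag2 !mul_mx2 scale_mx2; congr mx2; field; field_side.
Qed.

Lemma S_alpha_S_gamma_factor (a b c : F) :
  c != 0 -> c + 1 != 0 -> a + 1 != 0 -> c - a != 0 -> c - b != 0 ->
  S_alpha a b (c + 1) *m S_gamma a b c =
  (c / ((a + 1) * (c - b))) *: (diag2 (a + 1) (c + 1) *m N_diag b c *m diag2 1 c^-1).
Proof.
move=> *; rewrite /S_alpha /S_gamma /N_diag /diag2 !mul_mx2 scale_mx2.
by congr mx2; field; field_side.
Qed.

Lemma det_S_alpha (a b c : F) : c != 0 -> a + 1 != 0 ->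
  \det (S_alpha a b c) = (a + 1 - c) / ((a + 1) * (1 - z)).
Proof. by move=> *; rewrite det_mx2; field; field_side. Qed.

Lemma det_S_gamma (a b c : F) : c - a != 0 -> c - b != 0 ->
  \det (S_gamma a b c) = c * (c + 1) * (z - 1) / (z * (c - a) * (c - b)).
Proof. by move=> *; rewrite det_mx2; field; field_side. Qed.

Section GenericParameters.
Variables (a b g : F).
Hypotheses (a_neq0 : forall n : nat, a + n.+1%:R != 0)
  (g_neq0 : forall n : nat, g + n%:R != 0)
  (gb_neq0 : forall n : nat, g + n%:R - b != 0).
(* Integer shifts: the reordering of the steps meets every [g + n - (a + m)]. *)
Hypothesis ga_neq0 : forall m : int, g + m%:~R - a != 0.

Lemma ga_nat_neq0 n : g + n%:R - a != 0.
Proof. exact: ga_neq0 n. Qed.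

Lemma g0_neq0 : g != 0.
Proof. by have := g_neq0 0; rewrite addr0. Qed.

Lemma poch_ga_neq0 n : poch (g - a) n != 0.
Proof. by apply: poch_neq0 => i; rewrite addrAC ga_nat_neq0. Qed.

Lemma poch_gb_neq0 x n : poch (g + x%:R - b) n != 0.
Proof. by apply: poch_neq0 => i; rewrite addrAC -(addrA g) -natrD gb_neq0. Qed.

Lemma poch_g_neq0 x n : poch (g + x%:R) n != 0.
Proof. by apply: poch_neq0 => i; rewrite -addrA -natrD g_neq0. Qed.

Lemma poch_a_neq0 n : poch (a + 1) n != 0.
Proof. by apply: poch_neq0 => i; rewrite -addrA nat1r a_neq0. Qed.

Lemma S_gamma_A_alpha n p : S_gamma (a + p%:R) b (g + n%:R) *m A_alpha a b (g + n%:R) p =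
  A_alpha a b (g + n%:R + 1) p *m S_gamma a b (g + n%:R).
Proof.
elim: p => [|p IH] /=; first by rewrite addr0 mulmx1 mul1mx.
rewrite -mulmxA -IH !mulmxA -natr1 addrA; congr (_ *m _); symmetry.
have := g_neq0 n.+1; rewrite -natr1 addrA => gn1_neq0.
have := a_neq0 p; rewrite -natr1 addrA => ap1_neq0.
have gap_neq0 := ga_neq0 (n%:Z - p%:Z).
have gap1_neq0 := ga_neq0 (n%:Z - p%:Z - 1).
have gn_neq0 := g_neq0 n; have gbn_neq0 := gb_neq0 n.
by apply: S_alpha_S_gamma_commute => //; nonzero_by_hyp.
Qed.

Lemma A_diag_alpha_gamma s p :
  A_diag a b (g + s%:R) p = A_alpha a b (g + s%:R + p%:R) p *m A_gamma a b (g + s%:R) p.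
Proof.
elim: p => [|p IH] /=; first by rewrite mulmx1.
have := S_gamma_A_alpha (s + p) p; rewrite natrD addrA => push.
by rewrite IH -natr1 !addrA !mulmxA -(mulmxA _ (S_gamma _ _ _)) push !mulmxA.
Qed.

Lemma A_p0r_diag s p : A_p0r a b g p (s + p) = A_diag a b (g + s%:R) p *m A_gamma a b g s.
Proof. by rewrite A_p0r_alpha A_gamma_add mulmxA A_diag_alpha_gamma natrD addrA. Qed.

Lemma A_gamma_factor s : A_gamma a b g s =
  (poch g s / (poch (g - a) s * poch (g - b) s)) *:
  (diag2 1 (g + s%:R) *m N_gamma_prod a b g s *m diag2 1 g^-1).
Proof.
have g0 := g0_neq0.
elim: s => [|s IH].
  by rewrite /= !poch0 /diag2 mx2_1 !mul_mx2 scale_mx2; congr mx2; field; field_side.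
have gs := g_neq0 s; have gsa := ga_nat_neq0 s; have gsb := gb_neq0 s.
rewrite /= IH S_gamma_factor // mulmx_diag2_conj //.
rewrite diag2_1 mulmx1 -natr1 addrA; congr (_ *: _).
have := poch_ga_neq0 s; have := poch_gb_neq0 0 s; rewrite addr0 => ? ?.
by rewrite !pochS; field; field_side.
Qed.

Lemma A_diag_factor s p :
  A_diag a b (g + s%:R) p.+1 =
  (poch (g + s%:R) p.+1 / (poch (a + 1) p.+1 * poch (g + s%:R - b) p.+1)) *:
  (diag2 (a + p.+1%:R) (g + s%:R + p.+1%:R) *m N_diag_prod a b (g + s%:R) p *m
   diag2 1 (g + s%:R)^-1).
Proof.
have shift n : g + s%:R + n%:R = g + (s + n)%:R by rewrite natrD addrA.
have gsn n : g + s%:R + n%:R != 0 by rewrite shift.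
have gbsn n : g + s%:R + n%:R - b != 0 by rewrite shift.
elim: p => [|p IH].
  have := a_neq0 0; have := gsn 0; have := gsn 1; have := gbsn 0; have := ga_nat_neq0 s.
  by rewrite /= !addr0 mulmx1 => *; rewrite S_alpha_S_gamma_factor // !poch1.
have ap2 : a + p.+1%:R + 1 != 0 by rewrite -addrA natr1.
have gp2 : g + s%:R + p.+1%:R + 1 != 0 by rewrite -addrA natr1.
have gp1 := gsn p.+1; have gbp1 := gbsn p.+1; have ga := ga_nat_neq0 s.
rewrite A_diagS IH S_alpha_S_gamma_factor; try nonzero_by_hyp.
rewrite mulmx_diag2_conj // [N_diag_prod _ _ _ p.+1]/= -!natr1 !addrA; congr (_ *: _).
have := poch_g_neq0 s p.+1; have := poch_a_neq0 p.+1; have := poch_gb_neq0 s p.+1.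
by rewrite !(pochS _ p.+1) => *; field; field_side.
Qed.

Lemma A_p0r_factor s p : A_p0r a b g p.+1 (s + p.+1) =
  (poch g (s + p.+1) / (poch (a + 1) p.+1 * poch (g - a) s * poch (g - b) (s + p.+1))) *:
  (diag2 (a + p.+1%:R) (g + (s + p.+1)%:R) *m
   Phi a b g s p *m diag2 1 g^-1).
Proof.
rewrite A_p0r_diag A_diag_factor A_gamma_factor mulmx_diag2_conj //.
rewrite diag2_1 mulmx1 natrD addrA; congr (_ *: _).
have := poch_g_neq0 s p.+1; have := poch_a_neq0 p.+1; have := poch_gb_neq0 s p.+1.
have := poch_g_neq0 0 s; have := poch_gb_neq0 0 s; have := poch_ga_neq0 s.
by rewrite !addr0 !pochD (addrAC g (- b)) => *; field; field_side.
Qed.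

Lemma A_p0r_entries s p :
  let r := (s + p.+1)%N in
  let D := poch (g - a) s * poch (g - b) r in
  [/\ A_p0r a b g p.+1 r 0 0 = poch g r * Phi a b g s p 0 0 / (poch (a + 1) p * D),
      A_p0r a b g p.+1 r 0 1 = poch (g + 1) r.-1 * Phi a b g s p 0 1 / (poch (a + 1) p * D),
      A_p0r a b g p.+1 r 1 0 = poch g r.+1 * Phi a b g s p 1 0 / (poch (a + 1) p.+1 * D) &
      A_p0r a b g p.+1 r 1 1 = poch (g + 1) r * Phi a b g s p 1 1 / (poch (a + 1) p.+1 * D)].
Proof.
move=> r D.
have g0 := g0_neq0; have gr := g_neq0 r; have ap := a_neq0 p.
have := poch_g_neq0 0 r; have := poch_a_neq0 p; have := poch_gb_neq0 0 r.
have := poch_ga_neq0 s; rewrite !addr0 => *.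
have g_r1 : poch g r = g * poch (g + 1) r.-1 by rewrite /r addnS pochSl.
have g1_r : poch (g + 1) r = poch g r * (g + r%:R) / g by rewrite -pochS pochSl mulrAC mulfV ?mul1r.
rewrite A_p0r_factor -/r [Phi _ _ _ _ _]mx2_eta /diag2 !mul_mx2 scale_mx2 !mx2E /D.
rewrite (pochS (a + 1) p) (pochS g r) g1_r.
by split; rewrite ?g_r1; field; field_side.
Qed.

Lemma det_A_gamma r : \det (A_gamma a b g r) =
  (z ^+ r)^-1 * (z - 1) ^+ r * poch g r * poch (g + 1) r / (poch (g - a) r * poch (g - b) r).
Proof.
elim: r => [|r IH]; first by rewrite /= det1 !poch0 !expr0 !(invr1, mul1r).
rewrite [A_gamma _ _ _ r.+1]/= det_mulmx IH det_S_gamma ?ga_nat_neq0 ?gb_neq0 // !pochS !exprS.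
have := poch_ga_neq0 r; have := poch_gb_neq0 0 r; rewrite addr0 => *.
have := ga_nat_neq0 r; have := gb_neq0 r; have : z ^+ r != 0 by rewrite expf_neq0.
by move=> *; field; field_side.
Qed.

Lemma det_A_p0r k p : \det (A_p0r a b g p (k + p)) =
  (z ^+ (k + p))^-1 * (z - 1) ^+ k * poch g (k + p) * poch (g + 1) (k + p) /
  (poch (a + 1) p * poch (g - a) k * poch (g - b) (k + p)).
Proof.
elim: p k => [|p IH] k; first by rewrite addn0 det_A_gamma poch0 mul1r.
have ap1 : a + p%:R + 1 != 0 by rewrite -addrA natr1.
rewrite [A_p0r _ _ _ p.+1 _]/= det_mulmx -addSnnS IH det_S_alpha ?g_neq0 //.
have := poch_g_neq0 0 (k.+1 + p); have := poch_g_neq0 1 (k.+1 + p).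
have := poch_gb_neq0 0 (k.+1 + p); have := poch_a_neq0 p; have := poch_ga_neq0 k.
have := ga_nat_neq0 k; have := a_neq0 p; have : z ^+ (k.+1 + p) != 0 by rewrite expf_neq0.
rewrite !addr0 !(pochS _ p) !(pochS _ k) (exprS (z - 1)) => *.
by field; field_side.
Qed.

End GenericParameters.

End Steps.
End Contiguity.
End Generic.

HB.instance Definition _ := GRing.RMorphism.copy embz (@FracField.tofrac _ \o polyC).
HB.instance Definition _ := GRing.RMorphism.copy embg (@FracField.tofrac _ \o polyC).
HB.instance Definition _ := GRing.RMorphism.copy embb (@FracField.tofrac _ \o polyC).
HB.instance Definition _ := GRing.RMorphism.copy embK (embb \o embg \o embz).

Lemma tofrac_subX_neq0 (R : fieldType) (c : R) :
  (FracField.tofrac c%:P - FracField.tofrac 'X : {fraction {poly R}}) != 0.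
Proof.
rewrite -tofracB tofrac_eq0 subr_eq0; apply/eqP => /(congr1 (size : {poly R} -> nat)).
by rewrite size_polyX size_polyC; case: (c == 0).
Qed.

Lemma zK_neq0 : zK != 0.
Proof. by rewrite fmorph_eq0 tofrac_eq0 polyX_eq0. Qed.

Lemma zK_neq1 : 1 - zK != 0.
Proof. by rewrite -(rmorph1 embK) -rmorphB fmorph_eq0 tofrac_subX_neq0. Qed.

Lemma aK_add_neq0 (n : nat) : aK + n.+1%:R != 0.
Proof.
rewrite -oppr_eq0 opprD addrC -(rmorph_nat embb) -rmorphN.
exact: tofrac_subX_neq0.
Qed.

Lemma gK_add_neq0 (n : nat) : gK + n%:R != 0.
Proof.
rewrite -(rmorph_nat embb) -rmorphD fmorph_eq0 -(rmorph_nat embg) -rmorphD fmorph_eq0.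
rewrite -oppr_eq0 opprD addrC -(rmorph_nat embz) -rmorphN.
exact: tofrac_subX_neq0.
Qed.

Lemma gK_sub_bK_neq0 (n : nat) : gK + n%:R - bK != 0.
Proof.
rewrite -(rmorph_nat embb) -rmorphD -rmorphB fmorph_eq0 -(rmorph_nat embg) -rmorphD.
exact: tofrac_subX_neq0.
Qed.

Lemma gK_sub_aK_neq0 (m : int) : gK + m%:~R - aK != 0.
Proof. by rewrite -(rmorph_int embb) -rmorphD; apply: tofrac_subX_neq0. Qed.

Definition agpoly (k : nat) (x : K) : Prop :=
  exists2 phi : {mpoly Kz[3]}, deg_ag_le phi k & x = evalABG phi.

Lemma agpolyW k l x : (k <= l)%N -> agpoly k x -> agpoly l x.
Proof. by move=> kl [phi phi_k ->]; exists phi => // m /phi_k /leq_trans; apply. Qed.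

Lemma agpolyD k x y : agpoly k x -> agpoly k y -> agpoly k (x + y).
Proof.
move=> [phi phi_k ->] [psi psi_k ->]; exists (phi + psi); last by rewrite /evalABG !rmorphD.
by move=> m /msuppD_le; rewrite mem_cat => /orP [/phi_k|/psi_k].
Qed.

Lemma agpolyN k x : agpoly k x -> agpoly k (- x).
Proof.
move=> [phi phi_k ->]; exists (- phi); last by rewrite /evalABG !rmorphN.
by move=> m; rewrite (perm_mem (msuppN phi)) => /phi_k.
Qed.

Lemma agpolyB k x y : agpoly k x -> agpoly k y -> agpoly k (x - y).
Proof. by move=> kx ky; apply: agpolyD kx (agpolyN ky). Qed.

Lemma agpolyM k l x y : agpoly k x -> agpoly l y -> agpoly (k + l) (x * y).
Proof.
move=> [phi phi_k ->] [psi psi_l ->]; exists (phi * psi); last by rewrite /evalABG !rmorphM.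
move=> m /msuppM_le /allpairsP [[m1 m2] /= [/phi_k k_m1 /psi_l l_m2 ->]].
by rewrite !mnmDE; lia.
Qed.

Lemma agpoly_embK (c : Kz) : agpoly 0 (embK c).
Proof.
exists c%:MP; last by rewrite /evalABG map_mpolyC mevalC.
by move=> m; rewrite msuppC; case: (c == 0) => //; rewrite inE => /eqP ->; rewrite !mnm0E.
Qed.

Lemma agpoly_abg (i : 'I_3) : agpoly ((i == 0 :> nat) + (i == 2 :> nat)) (abg i).
Proof.
exists 'X_i.
  by move=> m; rewrite msuppX inE => /eqP ->; rewrite !mnm1E; case: i => [[|[|[|]]]].
rewrite /evalABG map_mpolyX mevalX (bigD1 i) //= mnm1E eqxx expr1 big1 ?mulr1 // => j.
by rewrite mnm1E eq_sym => /negbTE ->; rewrite expr0.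
Qed.

Lemma agpoly_alpha : agpoly 1 aK.
Proof. exact: (agpoly_abg ord0). Qed.

Lemma agpoly_beta : agpoly 0 bK.
Proof. exact: (agpoly_abg (@Ordinal 3 1 isT)). Qed.

Lemma agpoly_gamma : agpoly 1 gK.
Proof. exact: (agpoly_abg (@Ordinal 3 2 isT)). Qed.

Lemma agpoly_nat k n : agpoly k n%:R.
Proof. by apply: agpolyW (leq0n k) _; rewrite -(rmorph_nat embK); apply: agpoly_embK. Qed.

Lemma agpoly0 k : agpoly k 0.
Proof. by rewrite -(mulr0n 1); apply: agpoly_nat. Qed.

Lemma agpoly1 k : agpoly k 1.
Proof. by rewrite -(mulr1n 1); apply: agpoly_nat. Qed.

Lemma agpoly_zK : agpoly 0 zK.
Proof. exact: agpoly_embK. Qed.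

Lemma agpoly_zKV : agpoly 0 zK^-1.
Proof. by rewrite -fmorphV; apply: agpoly_embK. Qed.

Definition agpoly_mx (A : 'M[K]_2) (k00 k01 k10 k11 : nat) : Prop :=
  [/\ agpoly k00 (A 0 0), agpoly k01 (A 0 1), agpoly k10 (A 1 0) & agpoly k11 (A 1 1)].

Lemma agpoly_mx2 x00 x01 x10 x11 k00 k01 k10 k11 :
  agpoly k00 x00 -> agpoly k01 x01 -> agpoly k10 x10 -> agpoly k11 x11 ->
  agpoly_mx (Generic.mx2 x00 x01 x10 x11) k00 k01 k10 k11.
Proof. by rewrite /agpoly_mx Generic.mx2E00 Generic.mx2E01 Generic.mx2E10 Generic.mx2E11. Qed.

Lemma agpoly_dot k k1 l1 k2 l2 x1 y1 x2 y2 :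
  (k1 + l1 <= k)%N -> (k2 + l2 <= k)%N ->
  agpoly k1 x1 -> agpoly l1 y1 -> agpoly k2 x2 -> agpoly l2 y2 -> agpoly k (x1 * y1 + x2 * y2).
Proof.
move=> le1 le2 x1k y1l x2k y2l.
by apply: agpolyD; [apply: agpolyW le1 (agpolyM _ _) | apply: agpolyW le2 (agpolyM _ _)].
Qed.

Lemma agpoly_mxM (A B : 'M[K]_2) a00 a01 a10 a11 b00 b01 b10 b11 k00 k01 k10 k11 :
  agpoly_mx A a00 a01 a10 a11 -> agpoly_mx B b00 b01 b10 b11 ->
  (a00 + b00 <= k00)%N -> (a01 + b10 <= k00)%N -> (a00 + b01 <= k01)%N -> (a01 + b11 <= k01)%N ->
  (a10 + b00 <= k10)%N -> (a11 + b10 <= k10)%N -> (a10 + b01 <= k11)%N -> (a11 + b11 <= k11)%N ->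
  agpoly_mx (A *m B) k00 k01 k10 k11.
Proof.
move=> [A00 A01 A10 A11] [B00 B01 B10 B11] *; split; rewrite Generic.mulmx2E.
- exact: agpoly_dot A00 B00 A01 B10.
- exact: agpoly_dot A00 B01 A01 B11.
- exact: agpoly_dot A10 B00 A11 B10.
- exact: agpoly_dot A10 B01 A11 B11.
Qed.

Lemma agpoly_N_diag c : agpoly 1 c -> agpoly_mx (Generic.N_diag zK bK c) 0 0 0 1.
Proof.
move=> c1; apply: agpoly_mx2.
- exact: agpoly1.
- exact: agpolyM (agpolyN (agpolyB (agpoly1 0) agpoly_zK)) agpoly_beta.
- exact: agpolyN agpoly_zKV.
- exact: agpolyM (agpolyB c1 (agpolyW _ (agpolyM agpoly_beta agpoly_zK))) agpoly_zKV.
Qed.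

Lemma agpoly_diag2 x : agpoly 1 x -> agpoly_mx (Generic.diag2 x 1) 1 0 0 0.
Proof. by move=> x1; apply: agpoly_mx2; [|exact: agpoly0..|exact: agpoly1]. Qed.

Lemma agpoly_N_gamma c : agpoly 1 c -> agpoly_mx (Generic.N_gamma zK aK bK c) 1 1 0 1.
Proof.
have z1 := agpolyB (agpoly1 0) agpoly_zK.
move=> c1; apply: agpoly_mx2.
- exact: agpolyB (agpolyB c1 agpoly_alpha) (agpolyW _ agpoly_beta).
- exact: agpolyM (agpolyM z1 agpoly_alpha) agpoly_beta.
- exact: agpoly_zKV.
- exact: agpolyM (agpolyM (agpolyN z1) c1) agpoly_zKV.
Qed.

Lemma agpoly_gamma_add n : agpoly 1 (gK + n%:R).
Proof. exact: agpolyD agpoly_gamma (agpoly_nat 1 n). Qed.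

Lemma agpoly_N_diag_prod s p :
  agpoly_mx (Generic.N_diag_prod zK aK bK (gK + s%:R) p) p p p p.+1.
Proof.
elim: p => [|p IH]; first exact: agpoly_N_diag (agpoly_gamma_add s).
have c1 : agpoly 1 (gK + s%:R + p.+1%:R) by rewrite -addrA -natrD; apply: agpoly_gamma_add.
have ND : agpoly_mx (Generic.N_diag zK bK (gK + s%:R + p.+1%:R) *m
                     Generic.diag2 (aK + p.+1%:R) 1) 1 0 1 1.
  have ap1 := agpolyD agpoly_alpha (agpoly_nat 1 p.+1).
  by apply: agpoly_mxM; [exact: agpoly_N_diag c1 | exact: agpoly_diag2 ap1 | ..].
by apply: agpoly_mxM; [exact: ND | exact: IH | lia..].
Qed.

Lemma agpoly_N_gamma_prod s : agpoly_mx (Generic.N_gamma_prod zK aK bK gK s) s s s.-1 s.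
Proof.
elim: s => [|s IH].
  by rewrite /= Generic.mx2_1; apply: agpoly_mx2; [exact: agpoly1|exact: agpoly0..|exact: agpoly1].
rewrite [Generic.N_gamma_prod _ _ _ _ _]/=; case: s IH => [|s] IH.
  by rewrite mulmx1; apply: agpoly_N_gamma (agpoly_gamma_add 0).
by apply: agpoly_mxM; [exact: agpoly_N_gamma (agpoly_gamma_add s.+1) | exact: IH | lia..].
Qed.

Lemma agpoly_Phi s p :
  agpoly_mx (Generic.Phi zK aK bK gK s p) (s + p) (s + p) (s + p) (s + p).+1.
Proof.
rewrite /Generic.Phi; case: s => [|s]; first by rewrite mulmx1 add0n; apply: agpoly_N_diag_prod.
by apply: agpoly_mxM; [exact: agpoly_N_diag_prod | exact: agpoly_N_gamma_prod | lia..].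
Qed.

Theorem lemma3p3 (p r : nat) (hp : (1 <= p)%N) (hpr : (p <= r)%N) :
  (exists phi11 phi12 phi21 phi22 : {mpoly Kz[3]},
     [/\ deg_ag_le phi11 r.-1, deg_ag_le phi12 r.-1,
         deg_ag_le phi21 r.-1, deg_ag_le phi22 r &
     let D := poch (gK - aK) (r - p) * poch (gK - bK) r in
     [/\ Amat p r 0 0 = poch gK r * evalABG phi11 / (poch (aK + 1) p.-1 * D),
         Amat p r 0 1 = poch (gK + 1) r.-1 * evalABG phi12 / (poch (aK + 1) p.-1 * D),
         Amat p r 1 0 = poch gK r.+1 * evalABG phi21 / (poch (aK + 1) p * D) &
         Amat p r 1 1 = poch (gK + 1) r * evalABG phi22 / (poch (aK + 1) p * D)]])
  /\
  \det (Amat p r) =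
    zK ^- r * (zK - 1) ^+ (r - p) * poch gK r * poch (gK + 1) r
    / (poch (aK + 1) p * poch (gK - aK) (r - p) * poch (gK - bK) r).
Proof.
have det_A := Generic.det_A_p0r zK_neq0 zK_neq1 aK_add_neq0 gK_add_neq0
  gK_sub_bK_neq0 gK_sub_aK_neq0.
have entries_A := Generic.A_p0r_entries zK_neq0 zK_neq1 aK_add_neq0 gK_add_neq0
  gK_sub_bK_neq0 gK_sub_aK_neq0.
have [s ->] : exists s, r = (s + p)%N by exists (r - p)%N; rewrite subnK.
split; first last.
  by rewrite addnK; apply: det_A.
case: p hp hpr => [//|p] _ _.
have [[phi11 deg11 e11] [phi12 deg12 e12] [phi21 deg21 e21] [phi22 deg22 e22]] := agpoly_Phi s p.
have [A00 A01 A10 A11] := entries_A s p.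
exists phi11, phi12, phi21, phi22; split; try by rewrite addnS.
by rewrite addnK -e11 -e12 -e21 -e22; split.
Qed.
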